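(* Let $a,b\in\mathbb{H}$ be nonzero quaternions lying in the same closed orthant of $\mathbb{R}^4$, and let $\lambda,\mu\in\mathbb{H}$. Then \[ \big\|(a+b)^{-1}(a\lambda+b\mu)-\lambda\big\| \le \|\mu-\lambda\|. \]
   Context: A quaternion $w+xi+yj+zk$ is identified with the vector $(w,x,y,z)\in\mathbb{R}^4$, and $\|\cdot\|$ is the Euclidean norm (which is multiplicative on $\mathbb{H}$). Two vectors lie in the same closed orthant if for each coordinate their entries do not have strictly opposite signs. *)

From Stdlib Require Import Reals.
Open Scope R_scope.

(* The quaternion w + x i + y j + z k, identified with (w,x,y,z) in R^4. *)
Record quat : Type := Quat { qw : R; qx : R; qy : R; qz : R }.

Definition qzero : quat := Quat 0 0 0 0.

Definition qadd (p q : quat) : quat :=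
  Quat (qw p + qw q) (qx p + qx q) (qy p + qy q) (qz p + qz q).

Definition qopp (p : quat) : quat := Quat (- qw p) (- qx p) (- qy p) (- qz p).

Definition qsub (p q : quat) : quat := qadd p (qopp q).

Definition qmul (p q : quat) : quat :=
  Quat (qw p * qw q - qx p * qx q - qy p * qy q - qz p * qz q)
       (qw p * qx q + qx p * qw q + qy p * qz q - qz p * qy q)
       (qw p * qy q - qx p * qz q + qy p * qw q + qz p * qx q)
       (qw p * qz q + qx p * qy q - qy p * qx q + qz p * qw q).

Definition qnormsq (p : quat) : R :=
  qw p * qw p + qx p * qx p + qy p * qy p + qz p * qz p.

Definition qnorm (p : quat) : R := sqrt (qnormsq p).

Definition qconj (p : quat) : quat := Quat (qw p) (- qx p) (- qy p) (- qz p).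

Definition qscale (r : R) (p : quat) : quat :=
  Quat (r * qw p) (r * qx p) (r * qy p) (r * qz p).

(* Multiplicative inverse: conj(p) / |p|^2 (only meaningful for p <> 0). *)
Definition qinv (p : quat) : quat := qscale (/ qnormsq p) (qconj p).

Definition not_opp_sign (s t : R) : Prop :=
  ~ (s < 0 /\ 0 < t) /\ ~ (0 < s /\ t < 0).

Definition same_closed_orthant (a b : quat) : Prop :=
  not_opp_sign (qw a) (qw b) /\ not_opp_sign (qx a) (qx b) /\
  not_opp_sign (qy a) (qy b) /\ not_opp_sign (qz a) (qz b).

(* Since [(a + b) λ] cancels against [λ], the left-hand side equals
   [(a + b)^-1 b (μ - λ)], whose norm is [‖b‖ ‖μ - λ‖ / ‖a + b‖] by
   multiplicativity of the norm.  For [a] and [b] in a common closed orthant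
   the cross term [⟨a, b⟩] is nonnegative, so [‖a + b‖² ≥ ‖a‖² + ‖b‖²]; hence
   [a + b ≠ 0] and [‖b‖ ≤ ‖a + b‖]. *)

From Stdlib Require Import Reals Lra Psatz.
Open Scope R_scope.

Lemma qnormsq_ge0 (p : quat) : 0 <= qnormsq p.
Proof. destruct p; unfold qnormsq; simpl; nra. Qed.

Lemma qnormsq_gt0 (p : quat) : p <> qzero -> 0 < qnormsq p.
Proof.
  destruct p as [w x y z]; unfold qnormsq; simpl; intro Hp.
  destruct (Req_dec w 0), (Req_dec x 0), (Req_dec y 0), (Req_dec z 0);
    subst; try (exfalso; apply Hp; reflexivity); nra.
Qed.

Lemma qnormsq_mul (p q : quat) : qnormsq (qmul p q) = qnormsq p * qnormsq q.
Proof. destruct p, q; unfold qnormsq, qmul; simpl; ring. Qed.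

(* Also valid for [p = qzero], thanks to Stdlib's convention [/ 0 = 0]. *)
Lemma qnormsq_inv (p : quat) : qnormsq (qinv p) = / qnormsq p.
Proof.
  destruct p as [w x y z]; unfold qinv, qscale, qconj, qnormsq; simpl.
  set (N := w * w + x * x + y * y + z * z).
  destruct (Req_dec N 0) as [HN | HN].
  - rewrite HN, Rinv_0; ring.
  - unfold N in *; field; exact HN.
Qed.

Lemma qnorm_le (p q : quat) : qnormsq p <= qnormsq q -> qnorm p <= qnorm q.
Proof. exact (sqrt_le_1_alt (qnormsq p) (qnormsq q)). Qed.

Lemma qmul_inv_add_sub (a b lam mu : quat) : qnormsq (qadd a b) <> 0 ->
  qsub (qmul (qinv (qadd a b)) (qadd (qmul a lam) (qmul b mu))) lam
  = qmul (qinv (qadd a b)) (qmul b (qsub mu lam)).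
Proof.
  destruct a, b, lam, mu; unfold qnormsq, qadd; simpl; intro Hs.
  unfold qsub, qmul, qinv, qadd, qopp, qscale, qconj, qnormsq; simpl.
  f_equal; field; exact Hs.
Qed.

Lemma not_opp_sign_mul_ge0 (s t : R) : not_opp_sign s t -> 0 <= s * t.
Proof.
  intros [Hst Hts].
  destruct (Rle_lt_dec 0 s), (Rle_lt_dec 0 t); nra.
Qed.

Lemma same_closed_orthant_qnormsq_add (a b : quat) : same_closed_orthant a b ->
  qnormsq a + qnormsq b <= qnormsq (qadd a b).
Proof.
  destruct a, b; unfold same_closed_orthant, qnormsq, qadd; simpl.
  intros (Hw & Hx & Hy & Hz).
  apply not_opp_sign_mul_ge0 in Hw, Hx, Hy, Hz.
  nra.
Qed.

Theorem lemma4p2 (a b lam mu : quat) :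
  a <> qzero -> b <> qzero -> same_closed_orthant a b ->
  qnorm (qsub (qmul (qinv (qadd a b)) (qadd (qmul a lam) (qmul b mu))) lam)
    <= qnorm (qsub mu lam).
Proof.
  intros Ha _ Hab.
  pose proof (same_closed_orthant_qnormsq_add a b Hab) as Hsum.
  pose proof (qnormsq_gt0 a Ha).
  pose proof (qnormsq_ge0 b).
  pose proof (qnormsq_ge0 (qsub mu lam)).
  assert (Hs : 0 < qnormsq (qadd a b)) by lra.
  rewrite qmul_inv_add_sub by lra.
  apply qnorm_le.
  rewrite !qnormsq_mul, qnormsq_inv.
  set (N := qnormsq (qadd a b)) in *.
  apply Rle_trans with (/ N * (N * qnormsq (qsub mu lam))).
  - apply Rmult_le_compat_l; [left; apply Rinv_0_lt_compat; lra | nra].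
  - rewrite <- Rmult_assoc, Rinv_l by lra; lra.
Qed.
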